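(* Let $p_1,p_2\ge 5$ be distinct primes, $e_i=\zeta_{p_1}^i+\zeta_{p_1}^{-i}$, $b_j=\zeta_{p_2}^j+\zeta_{p_2}^{-j}$, $n_1=\frac{p_1-1}{2}$, $n_2=\frac{p_2-1}{2}$, and $\mathbb{K}=\mathbb{Q}(\zeta_{p_1}+\zeta_{p_1}^{-1})\mathbb{Q}(\zeta_{p_2}+\zeta_{p_2}^{-1})$. Let $\mathcal{I}\subseteq\mathcal{O}_{\mathbb{K}}$ be the $\mathbb{Z}$-module with $\mathbb{Z}$-basis consisting of all products $e_ib_j$ ($1\le i\le n_1$, $1\le j\le n_2$) except that $e_{n_1}b_{n_2}$ is replaced by $2e_{n_1}b_{n_2}$. Then $\mathcal{I}$ is not an ideal of $\mathcal{O}_{\mathbb{K}}$.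
   Context: $\zeta_m=e^{2\pi i/m}$. *)

From HB Require Import structures.
From mathcomp Require Import all_boot all_order all_algebra all_field.
Set Implicit Arguments. Unset Strict Implicit. Unset Printing Implicit Defensive.
Import Order.TTheory GRing.Theory Num.Theory.
Local Open Scope ring_scope.

(* zeta m = e^{2 pi i / m}: m.-root (-1) is the m-th root of -1 of minimal
   non-negative argument, i.e. e^{i pi / m}; its square is e^{2 pi i / m}. *)
Definition zeta (m : nat) : algC := (m.-root (-1)) ^+ 2.

Definition cosz (m k : nat) : algC := zeta m ^+ k + (zeta m)^-1 ^+ k.

Inductive gen_field (x y : algC) : algC -> Prop :=
| gf_rat (q : rat) : gen_field x y (ratr q)
| gf_x : gen_field x y x
| gf_y : gen_field x y y
| gf_add a b : gen_field x y a -> gen_field x y b -> gen_field x y (a + b)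
| gf_opp a : gen_field x y a -> gen_field x y (- a)
| gf_mul a b : gen_field x y a -> gen_field x y b -> gen_field x y (a * b)
| gf_inv a : gen_field x y a -> gen_field x y (a^-1).

Definition inK (p1 p2 : nat) (x : algC) : Prop :=
  gen_field (cosz p1 1) (cosz p2 1) x.

Definition inOK (p1 p2 : nat) (x : algC) : Prop := inK p1 p2 x /\ x \in Aint.

Definition genI (p1 p2 i j : nat) : algC :=
  let n1 := ((p1 - 1) %/ 2)%N in let n2 := ((p2 - 1) %/ 2)%N in
  (if (i == n1) && (j == n2) then 2 else 1) * (cosz p1 i * cosz p2 j).

Definition inI (p1 p2 : nat) (x : algC) : Prop :=
  exists c : nat -> nat -> int,
    x = \sum_(1 <= i < (((p1 - 1) %/ 2)%N).+1) \sum_(1 <= j < (((p2 - 1) %/ 2)%N).+1)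
          (c i j)%:~R * genI p1 p2 i j.

Definition is_ideal_of (O S : algC -> Prop) : Prop :=
  (forall x, S x -> O x) /\ S 0 /\
  (forall x y, S x -> S y -> S (x + y)) /\
  (forall r x, O r -> S x -> S (r * x)).

(* Let Tr be the trace of Q(zeta_{p1 p2})/Q and consider the Z-linear form
   y |-> Tr(e_{n1} b_{n2} y).  Since e_n e_i = e_{n+i} + e_{n-i} and
   Tr_{Q(zeta_p)/Q}(zeta_p^z) is p - 1 or -1 according as p | z or not, its value
   on e_i b_j is t_{p1}(i) t_{p2}(j), where t_p(n) = 2p - 4 and t_p(i) = -4 for
   i < n.  The doubled generator 2 e_{n1} b_{n2} therefore makes the form take
   values in 8Z on all of I.  On the other hand e_{n1-1} b_{n2-1} lies in I, hence
   in O_K, and its product with e_1 b_1 in I is (e_{n1} + e_{n1-2})(b_{n2} + b_{n2-2}),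
   on which the form is (2 p1 - 8)(2 p2 - 8), which is 4 mod 8 as p1, p2 are odd. *)

From HB Require Import structures.
From mathcomp Require Import all_boot all_order all_algebra all_field.
From mathcomp Require Import zify ring.
Set Implicit Arguments. Unset Strict Implicit. Unset Printing Implicit Defensive.
Import GRing.Theory Num.Theory.
Local Open Scope ring_scope.

Lemma sum_unity_root_powers (R : idomainType) (x : R) (n : nat) :
  (0 < n)%N -> x ^+ n = 1 -> x != 1 -> \sum_(1 <= k < n) x ^+ k = -1.
Proof.
move=> n_gt0 xn1 x_neq1.
have geo0 : \sum_(0 <= k < n) x ^+ k = 0.
  have nz : x - 1 != 0 by rewrite subr_eq0.
  by apply: (mulfI nz); rewrite mulr0 big_mkord -subrX1 xn1 subrr.
by move: geo0; rewrite big_ltn // expr0 => /eqP; rewrite addrC addr_eq0 => /eqP.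
Qed.

Definition cos_pow (R : unitRingType) (w : R) (k : nat) : R := w ^+ k + w^-1 ^+ k.

Lemma cos_pow_mul (R : fieldType) (w : R) (a b : nat) : w != 0 -> (b <= a)%N ->
  cos_pow w a * cos_pow w b = cos_pow w (a + b) + cos_pow w (a - b).
Proof.
move=> w_neq0 le_ba; rewrite /cos_pow -(subnK le_ba) addnK -addnA !exprD.
have wwV : w ^+ b * w^-1 ^+ b = 1 by rewrite -exprMn mulfV ?expr1n.
set c := (a - b)%N; set x := w ^+ b; set y := w^-1 ^+ b.
have -> : (w ^+ c * x + w^-1 ^+ c * y) * (x + y) =
  w ^+ c * (x * x) + w^-1 ^+ c * (y * y) + (w ^+ c + w^-1 ^+ c) * (x * y) by ring.
by rewrite wwV mulr1 -!exprD addnn -mul2n.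
Qed.

Lemma rmorph_cos_pow (R S : fieldType) (u : {rmorphism R -> S}) (w : R) (k : nat) :
  u (cos_pow w k) = cos_pow (u w) k.
Proof. by rewrite rmorphD !rmorphXn fmorphV. Qed.

Lemma cos_pow_exp (R : fieldType) (w : R) (k a : nat) :
  cos_pow (w ^+ k) a = cos_pow w (k * a).
Proof. by rewrite /cos_pow -exprVn !exprM. Qed.

Section TraceOfCosines.
Variables (R : fieldType) (p : nat) (w : R).
Hypothesis w_prim : p.-primitive_root w.

Definition trace_cos (z : nat) : R := \sum_(1 <= k < p) cos_pow w (k * z).

Lemma trace_cos_dvd (z : nat) : (p %| z)%N -> trace_cos z = (2 * (p%:Z - 1))%:~R.
Proof.
move=> p_dvd_z; rewrite /trace_cos (eq_bigr (fun=> 2)) => [|k _]; last first.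
  have wkz : w ^+ (k * z) = 1 by apply/eqP; rewrite -(prim_order_dvd w_prim) dvdn_mull.
  by rewrite /cos_pow exprVn wkz invr1.
by rewrite big_const_nat iter_addr addr0 subzn ?(prim_order_gt0 w_prim) // intrM mulr_natr.
Qed.

Lemma trace_cos_ndvd (z : nat) : ~~ (p %| z)%N -> trace_cos z = -2.
Proof.
move=> p_ndvd_z.
have wz_neq1 : w ^+ z != 1 by rewrite -(prim_order_dvd w_prim).
have wzp : (w ^+ z) ^+ p = 1 by rewrite exprAC (prim_expr_order w_prim) expr1n.
have wVz_neq1 : w^-1 ^+ z != 1 by rewrite exprVn invr_eq1.
have wVzp : (w^-1 ^+ z) ^+ p = 1 by rewrite exprVn exprVn wzp invr1.
rewrite /trace_cos (eq_bigr (fun k => (w ^+ z) ^+ k + (w^-1 ^+ z) ^+ k)) => [|k _].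
  by rewrite big_split /= !sum_unity_root_powers ?(prim_order_gt0 w_prim) // -opprD.
by rewrite /cos_pow -!exprM mulnC.
Qed.
End TraceOfCosines.

Lemma odd_half_pred (m : nat) : odd m -> m = ((m - 1) %/ 2).*2.+1.
Proof. by move=> m_odd; have := odd_double_half m; rewrite m_odd; lia. Qed.

Definition trace_mid_mul (p i : nat) : int :=
  if i == ((p - 1) %/ 2)%N then 2 * p%:Z - 4 else -4.

Section MidTrace.
Variables (R : fieldType) (p : nat) (w : R).
Hypotheses (w_prim : p.-primitive_root w) (p_odd : odd p) (p_gt1 : (1 < p)%N).
Let n := ((p - 1) %/ 2)%N.

Lemma trace_cos_mid (i : nat) : (i <= n)%N ->
  trace_cos p w (n + i) + trace_cos p w (n - i) = (trace_mid_mul p i)%:~R.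
Proof.
rewrite /trace_mid_mul -/n => le_in; have p_eq := odd_half_pred p_odd; rewrite -/n in p_eq.
rewrite trace_cos_ndvd ?gtnNdvd //; try lia.
have [-> | ne_in] := eqVneq i n.
  by rewrite subnn trace_cos_dvd ?dvdn0 //; ring.
by rewrite trace_cos_ndvd ?gtnNdvd //; try lia; ring.
Qed.
End MidTrace.

Lemma zeta_expn (p : nat) : (0 < p)%N -> zeta p ^+ p = 1.
Proof. by move=> p_gt0; rewrite /zeta exprAC rootCK // sqrrN expr1n. Qed.

Lemma zeta_neq1 (p : nat) : (1 < p)%N -> zeta p != 1.
Proof.
move=> p_gt1; apply/eqP; rewrite /zeta; set r := p.-root (-1) => r2_eq1.
have rp : r ^+ p = -1 by rewrite rootCK // ltnW.
have : (r - 1) * (r + 1) == 0 by rewrite -subr_sqr expr1n r2_eq1 subrr.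
rewrite mulf_eq0 subr_eq0 addr_eq0 => /orP [/eqP r1 | /eqP rN1].
  by move/eqP: rp; rewrite r1 expr1n -subr_eq0 opprK -(natrD _ 1 1) pnatr_eq0.
by have := rootC_lt0 (-1 : algC) p_gt1; rewrite -/r rN1 ltrN10.
Qed.

Lemma zeta_prim_root (p : nat) : prime p -> p.-primitive_root (zeta p).
Proof.
move=> p_prime; have p_gt1 := prime_gt1 p_prime.
have [m m_prim m_dvd] := prim_order_exists (ltnW p_gt1) (zeta_expn (ltnW p_gt1)).
have /orP [/eqP m1 | /eqP mp] := (primeP p_prime).2 m m_dvd.
  move: (zeta_neq1 p_gt1); rewrite m1 in m_prim.
  by rewrite -[zeta p]expr1 (prim_expr_order m_prim) eqxx.
by rewrite mp in m_prim.
Qed.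

Lemma zeta_neq0 (p : nat) : prime p -> zeta p != 0.
Proof. by move=> p_prime; rewrite (prim_root_eq0 (zeta_prim_root p_prime)) -lt0n prime_gt0. Qed.

Section PairTrace.
Variables p1 p2 : nat.
Hypotheses (p1_prime : prime p1) (p2_prime : prime p2) (p1_neq_p2 : p1 != p2).

Lemma zeta_pair_aut_exists (k1 k2 : nat) :
  {u : {rmorphism algC -> algC} | (0 < k1 < p1)%N -> (0 < k2 < p2)%N ->
     u (zeta p1) = zeta p1 ^+ k1 /\ u (zeta p2) = zeta p2 ^+ k2}.
Proof.
have [k_range | k_out] := boolP ((0 < k1 < p1) && (0 < k2 < p2))%N; last first.
  by exists idfun => k1_range k2_range; rewrite k1_range k2_range in k_out.
case/andP: k_range => /andP [k1_gt0 k1_lt] /andP [k2_gt0 k2_lt].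
have co12 : coprime p1 p2 by rewrite prime_coprime // dvdn_prime2.
set k := chinese p1 p2 k1 k2.
have k_mod1 : (k %% p1)%N = k1 by rewrite /k chinese_modl // modn_small.
have k_mod2 : (k %% p2)%N = k2 by rewrite /k chinese_modr // modn_small.
have k_coprime : coprime k (p1 * p2).
  rewrite coprimeMr -(div.coprime_modl k p1) -(div.coprime_modl k p2) k_mod1 k_mod2.
  by rewrite !(coprime_sym k1) !(coprime_sym k2) !prime_coprime // !gtnNdvd.
have [u uE] := Qn_aut_exists k_coprime; exists u => _ _; split.
  rewrite uE ?exprM ?zeta_expn ?expr1n ?prime_gt0 //.
  by rewrite -(prim_expr_mod (zeta_prim_root p1_prime)) k_mod1.
rewrite uE ?(mulnC p1) ?exprM ?zeta_expn ?expr1n ?prime_gt0 //.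
by rewrite -(prim_expr_mod (zeta_prim_root p2_prime)) k_mod2.
Qed.

Definition zeta_pair_aut (k1 k2 : nat) := sval (zeta_pair_aut_exists k1 k2).

(* The trace of Q(zeta_{p1 p2})/Q, whose Galois group is (Z/p1)^* x (Z/p2)^*. *)
Definition pair_trace (y : algC) : algC :=
  \sum_(1 <= k1 < p1) \sum_(1 <= k2 < p2) zeta_pair_aut k1 k2 y.

Fact pair_trace_is_zmod_morphism : zmod_morphism pair_trace.
Proof.
move=> x y; rewrite /pair_trace -sumrB; apply: eq_bigr => k1 _.
by rewrite -sumrB; apply: eq_bigr => k2 _; rewrite rmorphB.
Qed.

HB.instance Definition _ :=
  GRing.isZmodMorphism.Build algC algC pair_trace pair_trace_is_zmod_morphism.

Lemma pair_trace_cos_prod (a b : nat) :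
  pair_trace (cosz p1 a * cosz p2 b) =
  trace_cos p1 (zeta p1) a * trace_cos p2 (zeta p2) b.
Proof.
rewrite /trace_cos big_distrlr /=; apply: eq_big_nat => k1 k1_range.
apply: eq_big_nat => k2 k2_range.
have [u1 u2] := svalP (zeta_pair_aut_exists k1 k2) k1_range k2_range.
by rewrite rmorphM /= !rmorph_cos_pow u1 u2 !cos_pow_exp.
Qed.

Lemma pair_trace_cos_sum_prod (a a' b b' : nat) :
  pair_trace ((cosz p1 a + cosz p1 a') * (cosz p2 b + cosz p2 b')) =
  (trace_cos p1 (zeta p1) a + trace_cos p1 (zeta p1) a') *
  (trace_cos p2 (zeta p2) b + trace_cos p2 (zeta p2) b').
Proof.
set A := cosz p1 a; set A' := cosz p1 a'; set B := cosz p2 b; set B' := cosz p2 b'.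
have -> : (A + A') * (B + B') = A * B + A * B' + (A' * B + A' * B') by ring.
by rewrite !raddfD /= !pair_trace_cos_prod; ring.
Qed.
End PairTrace.

Lemma sum_nat_dirac (V : nmodType) (m n a : nat) (F : nat -> V) : (m <= a < n)%N ->
  \sum_(m <= i < n) (if i == a then F i else 0) = F a.
Proof.
move=> a_range; rewrite (bigD1_seq a) ?mem_index_iota ?iota_uniq //= eqxx.
by rewrite big1 ?addr0 // => i /negPf ->.
Qed.

Lemma inI_genI (p1 p2 a b : nat) :
  (1 <= a <= (p1 - 1) %/ 2)%N -> (1 <= b <= (p2 - 1) %/ 2)%N ->
  inI p1 p2 (genI p1 p2 a b).
Proof.
move=> a_range b_range; exists (fun i j => if (i == a) && (j == b) then 1 else 0).
rewrite (eq_bigr (fun i => if i == a then genI p1 p2 a b else 0)) => [|i _].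
  by rewrite (sum_nat_dirac (fun=> genI p1 p2 a b)) ?ltnS.
case: eqP => [-> | _]; last by rewrite big1 // => j _; rewrite mul0r.
rewrite (eq_bigr (fun j => if j == b then genI p1 p2 a b else 0)) => [|j _].
  by rewrite (sum_nat_dirac (fun=> genI p1 p2 a b)) ?ltnS.
by case: eqP => [-> | _]; rewrite ?eqxx ?mul1r ?mul0r.
Qed.

Lemma odd_mul_not_dvd8 (a b : nat) : odd a -> odd b ->
  ~~ (8 %| (2 * a%:Z - 8) * (2 * b%:Z - 8))%Z.
Proof.
move=> /odd_half_pred a_eq /odd_half_pred b_eq; apply/dvdzP => [[m]].
rewrite a_eq b_eq; nia.
Qed.

Lemma prime_gt2_odd (p : nat) : prime p -> (2 < p)%N -> odd p.
Proof. by move=> p_prime; case: (even_prime p_prime) => [-> | ->]. Qed.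

Section NotAnIdeal.
Variables p1 p2 : nat.
Hypotheses (p1_prime : prime p1) (p2_prime : prime p2) (p1_neq_p2 : p1 != p2).
Hypotheses (p1_ge5 : (5 <= p1)%N) (p2_ge5 : (5 <= p2)%N).
Let n1 := ((p1 - 1) %/ 2)%N.
Let n2 := ((p2 - 1) %/ 2)%N.
Let p1_odd : odd p1. Proof. by apply: prime_gt2_odd; lia. Qed.
Let p2_odd : odd p2. Proof. by apply: prime_gt2_odd; lia. Qed.

Definition twisted_trace (y : algC) : algC :=
  pair_trace p1_prime p2_prime p1_neq_p2 (cosz p1 n1 * cosz p2 n2 * y).

Fact twisted_trace_is_zmod_morphism : zmod_morphism twisted_trace.
Proof. by move=> x y; rewrite /twisted_trace mulrBr raddfB. Qed.

HB.instance Definition _ :=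
  GRing.isZmodMorphism.Build algC algC twisted_trace twisted_trace_is_zmod_morphism.

Lemma twisted_trace_cos_prod (i j : nat) : (i <= n1)%N -> (j <= n2)%N ->
  twisted_trace (cosz p1 i * cosz p2 j) = (trace_mid_mul p1 i * trace_mid_mul p2 j)%:~R.
Proof.
move=> le_in1 le_jn2; rewrite /twisted_trace.
have -> : cosz p1 n1 * cosz p2 n2 * (cosz p1 i * cosz p2 j) =
          (cosz p1 n1 * cosz p1 i) * (cosz p2 n2 * cosz p2 j) by ring.
rewrite !cos_pow_mul ?zeta_neq0 // pair_trace_cos_sum_prod.
by rewrite !trace_cos_mid ?zeta_prim_root ?prime_gt1 // rmorphM.
Qed.

Definition genI_weight (i j : nat) : int :=
  (if (i == n1) && (j == n2) then 2 else 1) * (trace_mid_mul p1 i * trace_mid_mul p2 j).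

Lemma dvd8_genI_weight (i j : nat) : (8 %| genI_weight i j)%Z.
Proof.
rewrite /genI_weight /trace_mid_mul -/n1 -/n2; apply/dvdzP.
case: eqP => _; case: eqP => _ /=.
- by exists ((p1%:Z - 2) * (p2%:Z - 2)); ring.
- by exists (- (p1%:Z - 2)); ring.
- by exists (- (p2%:Z - 2)); ring.
- by exists 2.
Qed.

Lemma twisted_trace_genI (i j : nat) : (i <= n1)%N -> (j <= n2)%N ->
  twisted_trace (genI p1 p2 i j) = (genI_weight i j)%:~R.
Proof.
move=> le_in1 le_jn2; rewrite /genI -/n1 -/n2 /genI_weight.
have -> : (if (i == n1) && (j == n2) then 2 else 1 : algC) =
          (if (i == n1) && (j == n2) then 2 else 1 : int)%:~R by case: ifP.
by rewrite mulrzl raddfMz /= twisted_trace_cos_prod // -mulrzl -rmorphM.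
Qed.

Lemma twisted_trace_inI (y : algC) :
  inI p1 p2 y -> exists2 m : int, (8 %| m)%Z & twisted_trace y = m%:~R.
Proof.
case=> c ->; exists (\sum_(1 <= i < n1.+1) \sum_(1 <= j < n2.+1) c i j * genI_weight i j).
  by apply: rpred_sum => i _; apply: rpred_sum => j _; rewrite dvdz_mull ?dvd8_genI_weight.
rewrite raddf_sum rmorph_sum; apply: eq_big_nat => i /andP [_ lt_i].
rewrite raddf_sum rmorph_sum; apply: eq_big_nat => j /andP [_ lt_j].
by rewrite mulrzl raddfMz /= twisted_trace_genI // -mulrzl -rmorphM.
Qed.

Lemma twisted_trace_genI_mul :
  twisted_trace (genI p1 p2 n1.-1 n2.-1 * genI p1 p2 1 1) =
  ((2 * p1%:Z - 8) * (2 * p2%:Z - 8))%:~R.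
Proof.
have n1_ge2 : (2 <= n1)%N by rewrite /n1; lia.
have n2_ge2 : (2 <= n2)%N by rewrite /n2; lia.
rewrite /genI -/n1 -/n2 !ifF ?mul1r; try by apply/negbTE/nandP; left; apply/eqP; lia.
have -> : cosz p1 n1.-1 * cosz p2 n2.-1 * (cosz p1 1 * cosz p2 1) =
          (cosz p1 n1.-1 * cosz p1 1) * (cosz p2 n2.-1 * cosz p2 1) by ring.
rewrite !cos_pow_mul ?zeta_neq0 //; try lia.
rewrite !addn1 !prednK ?subn1; try lia.
set A := cosz p1 n1; set A' := cosz p1 n1.-2; set B := cosz p2 n2; set B' := cosz p2 n2.-2.
have -> : (A + A') * (B + B') = A * B + A * B' + (A' * B + A' * B') by ring.
rewrite !raddfD /= !twisted_trace_cos_prod; try lia.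
rewrite /trace_mid_mul -/n1 -/n2 !eqxx !ifF; try by apply/eqP; lia.
ring.
Qed.
End NotAnIdeal.

Theorem proposition3p8 (p1 p2 : nat) :
  prime p1 -> prime p2 -> (5 <= p1)%N -> (5 <= p2)%N -> p1 != p2 ->
  ~ is_ideal_of (inOK p1 p2) (inI p1 p2).
Proof.
move=> p1_prime p2_prime p1_ge5 p2_ge5 p1_neq_p2 [I_sub_OK [_ [_ I_mul]]].
have r_OK : inOK p1 p2 (genI p1 p2 ((p1 - 1) %/ 2).-1 ((p2 - 1) %/ 2).-1).
  by apply/I_sub_OK/inI_genI; lia.
have x_I : inI p1 p2 (genI p1 p2 1 1) by apply: inI_genI; lia.
have [m m_dvd8] := twisted_trace_inI p1_prime p2_prime p1_neq_p2 p1_ge5 p2_ge5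
  (I_mul _ _ r_OK x_I).
rewrite twisted_trace_genI_mul // => /intr_inj m_eq.
have p1_odd : odd p1 by apply: prime_gt2_odd; lia.
have p2_odd : odd p2 by apply: prime_gt2_odd; lia.
by move: m_dvd8; rewrite -m_eq (negPf (odd_mul_not_dvd8 p1_odd p2_odd)).
Qed.
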